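(* Let $T_1,T_2$ be tables joined on column $J$ with frequencies $a_v,b_v$ ($v\in\mathcal U$), let $\epsilon_1,\epsilon_2\in(0,1]$ and $p\in[\max\{\epsilon_1,\epsilon_2\},1]$. If $S_1=\mathrm{UBS}_{p,\epsilon_1/p}(T_1,J)$ and $S_2=\mathrm{UBS}_{p,\epsilon_2/p}(T_2,J)$ and $\hat J_{\mathrm{count}}=\frac{p}{\epsilon_1\epsilon_2}|S_1\bowtie_J S_2|$, then $$\mathrm{Var}[\hat J_{\mathrm{count}}] = \Big(\frac1p-1\Big)\gamma_{2,2} + \Big(\frac1{\epsilon_2}-\frac1p\Big)\gamma_{2,1} + \Big(\frac1{\epsilon_1}-\frac1p\Big)\gamma_{1,2} + \Big(\frac{p}{\epsilon_1\epsilon_2}-\frac1{\epsilon_1}-\frac1{\epsilon_2}+\frac1p\Big)\gamma_{1,1},$$ where $\gamma_{i,j}=\sum_{v\in\mathcal U}a_v^ib_v^j$.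
   Context: $T_1,T_2$ are finite multisets of tuples with a join attribute $J$ taking values in a finite set $\mathcal U$; $a_v$ (resp. $b_v$) is the number of tuples of $T_1$ (resp. $T_2$) with $J$-value $v$. $S_1\bowtie_J S_2$ is the set of pairs $(t_1,t_2)\in S_1\times S_2$ with $t_1.J=t_2.J$. $\mathrm{UBS}_{p,q}(T,J)$: given a hash function $h:\mathcal U\to[0,1]$, each tuple $t\in T$ with $h(t.J)<p$ is included independently with probability $q$; others are excluded. The values $h(v)$ are independent uniform on $[0,1]$, the same $h$ is used for both tables, and the Bernoulli coins are independent across all tuples and independent of $h$. (Note $\hat J_{\mathrm{count}}=|S_1\bowtie_J S_2|/(p q_1 q_2)$ with $q_i=\epsilon_i/p$.) *)

From HB Require Import structures.
From mathcomp Require Import all_boot all_order all_algebra.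
From mathcomp Require Import all_classical all_reals all_analysis.
Set Implicit Arguments.
Unset Strict Implicit.
Unset Printing Implicit Defensive.
Import Order.TTheory GRing.Theory Num.Theory.
Import numFieldTopology.Exports.
Local Open Scope classical_set_scope.
Local Open Scope ring_scope.

(* Tables.  Only the join attribute J matters; a table with frequencies
   [a : U -> nat] is modelled as the multiset of tuples indexed by pairs
   (v, k) with k < a v, the tuple (v,k) having J-value v. *)

Definition ubs_in {T : Type} {R : realType} (U : finType) (f : U -> nat)
  (p : R) (h : U -> T -> R) (c : forall v : U, 'I_(f v) -> T -> bool)
  (v : U) (k : 'I_(f v)) (w : T) : bool :=
  (h v w < p) && c v k w.

Definition join_size {T : Type} {R : realType} (U : finType) (a b : U -> nat)
  (p : R) (h : U -> T -> R)
  (c1 : forall v : U, 'I_(a v) -> T -> bool)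
  (c2 : forall v : U, 'I_(b v) -> T -> bool) (w : T) : R :=
  \sum_(v1 : U) \sum_(k1 < a v1) \sum_(v2 : U) \sum_(k2 < b v2)
     ((v1 == v2) && ubs_in p h c1 k1 w && ubs_in p h c2 k2 w)%:R.

Definition gamma {R : realType} (U : finType) (a b : U -> nat) (i j : nat) : R :=
  \sum_(v : U) (a v)%:R ^+ i * (b v)%:R ^+ j.

(* Mutual independence of the whole (finite) family consisting of the hash
   values h v (v in U) and all Bernoulli coins c1 v k, c2 v k: the product
   rule for every choice of measurable sets (choosing setT for some members
   gives the product rule for every subfamily). *)
Definition ubs_independent d (T : measurableType d) (R : realType)
  (P : probability T R) (U : finType) (a b : U -> nat) (h : U -> T -> R)
  (c1 : forall v : U, 'I_(a v) -> T -> bool)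
  (c2 : forall v : U, 'I_(b v) -> T -> bool) : Prop :=
  forall (A : U -> set R) (B1 : forall v : U, 'I_(a v) -> set bool)
         (B2 : forall v : U, 'I_(b v) -> set bool),
    (forall v, measurable (A v)) ->
    P [set w | (forall v, A v (h v w)) /\
               (forall v (k : 'I_(a v)), B1 v k (c1 v k w)) /\
               (forall v (k : 'I_(b v)), B2 v k (c2 v k w))]
    = ((\prod_(v : U) P (h v @^-1` A v)) *
       (\prod_(v : U) \prod_(k < a v) P (c1 v k @^-1` B1 v k)) *
       (\prod_(v : U) \prod_(k < b v) P (c2 v k @^-1` B2 v k)))%E.

From mathcomp Require Import all_boot all_order all_algebra.
From mathcomp Require Import all_classical all_reals all_analysis.
From mathcomp Require Import ring measurable_realfun.
Import Order.TTheory GRing.Theory Num.Theory.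
Local Open Scope classical_set_scope.
Local Open Scope ring_scope.

(* |S1 ⋈ S2| counts the matching pairs m = (t1, t2) (tuples of T1 and T2 with
   the same join value) of which both tuples are sampled, so its variance is
   the sum, over pairs of matching pairs m, m', of
   P(m and m' sampled) - P(m sampled) P(m' sampled).  By independence the
   first probability is p^#values q1^#T1-tuples q2^#T2-tuples, counting the
   distinct join values and tuples occurring in m, m'.  The covariance thus
   vanishes unless m and m' share their join value v, and summing what remains
   over the (a_v b_v)^2 pairs of matching pairs of each v yields the gammas. *)

Lemma big_tagged {R : Type} {idx : R} {op : Monoid.com_law idx}
    {I : finType} {J : I -> finType} (F : {i : I & J i} -> R) :
  \big[op/idx]_i \big[op/idx]_(j : J i) F (Tagged J j) = \big[op/idx]_t F t.
Proof. by rewrite sig_big_dep; apply: eq_bigr => -[]. Qed.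

Lemma prodr_if_mem_card (R : comSemiRingType) (I : finType) (S : {set I})
    (x : R) :
  \prod_i (if i \in S then x else 1) = x ^+ #|S|.
Proof. by rewrite -big_mkcond prodr_const. Qed.

Lemma sumr_expr_neq (R : comRingType) (n : nat) (q : R) :
  \sum_(i < n) \sum_(j < n) q ^+ (i != j).+1 =
  n%:R * q + (n%:R ^+ 2 - n%:R) * q ^+ 2.
Proof.
have expr_neq (i j : 'I_n) :
    q ^+ (i != j).+1 = q ^+ 2 + (if j == i then q - q ^+ 2 else 0).
  by rewrite eq_sym; case: eqP => _; rewrite /= ?expr1; ring.
under eq_bigr => i _ do
  rewrite (eq_bigr _ (fun j _ => expr_neq i j)) big_split /= -big_mkcond
          big_pred1_eq sumr_const card_ord.
by rewrite big_split /= !sumr_const card_ord; ring.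
Qed.

Lemma sumr_pair_mul {R : comRingType} {A B : finType}
    (f : A -> A -> R) (g : B -> B -> R) :
  \sum_(k : A * B) \sum_(k' : A * B) f k.1 k'.1 * g k.2 k'.2 =
  (\sum_i \sum_i' f i i') * (\sum_j \sum_j' g j j').
Proof.
rewrite big_distrlr -(pair_bigA _ (fun i j => \sum_k' f i k'.1 * g j k'.2)).
apply: eq_bigr => i _; apply: eq_bigr => j _.
by rewrite big_distrlr -(pair_bigA _ (fun i' j' => f i i' * g j j')).
Qed.

Section counting_variable.
Context d (T : measurableType d) (R : realType) (P : probability T R).
Local Open Scope ereal_scope.

Lemma measurable_bool_set (B : T -> bool) :
  measurable_fun setT B -> measurable [set w | B w].
Proof.
move=> mB; have := mB measurableT [set true] I; rewrite setTI.
by congr measurable; apply/seteqP; split => w /=.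
Qed.

Lemma natr_bool_indic (B : T -> bool) :
  (fun w => (B w)%:R : R) = \1_[set w | B w] :> (T -> R).
Proof. by apply/funext => w; rewrite indicE mem_setE. Qed.

Lemma Lfun_natr_bool (B : T -> bool) : measurable_fun setT B ->
  (fun w => (B w)%:R : R) \in Lfun P 1.
Proof.
move=> /measurable_bool_set mB; rewrite natr_bool_indic.
exact/Lfun1_integrable/integrable_indic.
Qed.

Lemma expectation_natr_bool (B : T -> bool) : measurable_fun setT B ->
  'E_P[fun w => (B w)%:R] = P [set w | B w].
Proof.
by move=> /measurable_bool_set mB; rewrite natr_bool_indic expectation_indic.
Qed.

Lemma expectation_fsum (I : finType) (F : I -> T -> R) :
    (forall i, F i \in Lfun P 1) ->
  'E_P[(\sum_i F i)%R] = \sum_i 'E_P[F i].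
Proof.
move=> FL; have -> : (\sum_i F i = \sum_(X <- map F (index_enum I)) X)%R.
  by rewrite big_map.
by rewrite expectation_sum ?big_map // => _ /mapP[i _ ->].
Qed.

Lemma variance_scaled_count (I : finType) (E : I -> T -> bool)
    (pr : I -> I -> R) (c : R) :
    (forall i, measurable_fun setT (E i)) ->
    (forall i j, P [set w | E i w && E j w] = (pr i j)%:E) ->
  'V_P[fun w => c * \sum_i (E i w)%:R]%R =
  (c ^+ 2 * \sum_i \sum_j (pr i j - pr i i * pr j j))%:E.
Proof.
move=> mE prE.
pose N i : T -> R := fun w => (E i w)%:R.
have NL i : N i \in Lfun P 1 by apply: Lfun_natr_bool.
have mEE i j : measurable_fun setT (fun w => E i w && E j w).
  exact: measurable_and.
have NM i j : (N i * N j)%R = (fun w => (E i w && E j w)%:R).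
  by apply/funext => w; rewrite fctE -natrM mulnb.
have NML i j : (N i * N j)%R \in Lfun P 1.
  by rewrite NM; apply: Lfun_natr_bool.
have ENM i j : 'E_P[N i * N j] = (pr i j)%:E.
  by rewrite NM expectation_natr_bool ?prE.
have EN i : 'E_P[N i] = (pr i i)%:E.
  by rewrite -ENM NM; congr expectation; apply/funext => w; rewrite andbb.
pose Y := (\sum_i N i)%R.
have YL : Y \in Lfun P 1 by apply: rpred_sum.
have YYL : (\sum_i \sum_j N i * N j)%R \in Lfun P 1.
  by apply: rpred_sum => i _; apply: rpred_sum.
have YY : (Y * Y = \sum_i \sum_j N i * N j)%R.
  by rewrite mulr_suml; apply: eq_bigr => i _; rewrite mulr_sumr.
have -> : (fun w => c * \sum_i (E i w)%:R)%R = (c \o* Y)%R.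
  by apply/funext => w; rewrite /Y fct_sumE /= mulrC.
have cYY : ((c \o* Y) * (c \o* Y) = c ^+ 2 \o* (Y * Y))%R.
  by apply/funext => w /=; rewrite fctE /= -[((Y * Y) w)%R]/(Y w * Y w)%R; ring.
rewrite /variance covarianceE ?Lfun_scale // cYY ?YY ?Lfun_scale //.
rewrite !expectationZl // !expectation_fsum //; last by move=> i; apply: rpred_sum.
under eq_bigr => i _ do
  rewrite expectation_fsum // (eq_bigr _ (fun j _ => ENM i j)) sumEFin.
rewrite (eq_bigr _ (fun i _ => EN i)).
rewrite !sumEFin -!EFinM -EFinB; congr EFin.
under [in RHS]eq_bigr => i _ do rewrite sumrB.
by rewrite sumrB -big_distrlr /=; ring.
Qed.

End counting_variable.

Section join_pairs.
Variables (U : finType) (a b : U -> nat).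

Definition join_pair := {v : U & ('I_(a v) * 'I_(b v))%type}.
Definition join_left (m : join_pair) : {v : U & 'I_(a v)} := Tagged _ (tagged m).1.
Definition join_right (m : join_pair) : {v : U & 'I_(b v)} := Tagged _ (tagged m).2.

Definition in_join {T : Type} {R : realType} (p : R) (h : U -> T -> R)
    (c1 : forall v, 'I_(a v) -> T -> bool) (c2 : forall v, 'I_(b v) -> T -> bool)
    (m : join_pair) (w : T) : bool :=
  ubs_in p h c1 (tagged m).1 w && ubs_in p h c2 (tagged m).2 w.

Lemma join_size_sum (T : Type) (R : realType) (p : R) (h : U -> T -> R)
    (c1 : forall v, 'I_(a v) -> T -> bool) (c2 : forall v, 'I_(b v) -> T -> bool)
    (w : T) :
  join_size p h c1 c2 w = \sum_m (in_join p h c1 c2 m w)%:R.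
Proof.
rewrite -big_tagged; apply: eq_bigr => v _.
rewrite -(pair_bigA _ (fun k1 k2 =>
  (ubs_in p h c1 k1 w && ubs_in p h c2 k2 w)%:R)).
apply: eq_bigr => k1 _; rewrite (bigD1 v) //= [X in _ + X]big1 ?addr0.
  by apply: eq_bigr => k2 _; rewrite eqxx.
by move=> v' v'v; apply: big1 => k2 _; rewrite eq_sym (negbTE v'v).
Qed.

Variables (R : comRingType) (p q1 q2 : R).

(* P(m and m' both sampled): one hash test per distinct join value and one
   coin per distinct tuple. *)
Definition pair_prob (m m' : join_pair) : R :=
  p ^+ (tag m != tag m').+1 * q1 ^+ (join_left m != join_left m').+1
  * q2 ^+ (join_right m != join_right m').+1.

Lemma pair_prob_diag m : pair_prob m m = p * q1 * q2.
Proof. by rewrite /pair_prob !eqxx. Qed.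

Lemma pair_prob_Tagged (v : U) (k k' : 'I_(a v) * 'I_(b v)) :
  pair_prob (Tagged _ k) (Tagged _ k') =
  p * q1 ^+ (k.1 != k'.1).+1 * q2 ^+ (k.2 != k'.2).+1.
Proof. by rewrite /pair_prob /join_left /join_right /= !eq_Tagged eqxx expr1. Qed.

Lemma pair_prob_tag_neq m m' : tag m != tag m' ->
  pair_prob m m' = pair_prob m m * pair_prob m' m'.
Proof.
move=> mm'; have tag_neq (J : U -> eqType) (x : J (tag m)) (y : J (tag m')) :
    Tagged J x != Tagged J y by apply: contra mm' => /eq_tag /= ->.
by rewrite !pair_prob_diag /pair_prob mm' !tag_neq; ring.
Qed.

Lemma sum_pair_prob_cov :
  \sum_m \sum_m' (pair_prob m m' - pair_prob m m * pair_prob m' m') =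
  \sum_v (p * ((a v)%:R * q1 + ((a v)%:R ^+ 2 - (a v)%:R) * q1 ^+ 2)
            * ((b v)%:R * q2 + ((b v)%:R ^+ 2 - (b v)%:R) * q2 ^+ 2)
          - ((a v)%:R * (b v)%:R) ^+ 2 * (p * q1 * q2) ^+ 2).
Proof.
have row m : \sum_m' (pair_prob m m' - pair_prob m m * pair_prob m' m') =
    \sum_(k' : 'I_(a (tag m)) * 'I_(b (tag m)))
      (p * (q1 ^+ ((tagged m).1 != k'.1).+1 * q2 ^+ ((tagged m).2 != k'.2).+1)
       - (p * q1 * q2) ^+ 2).
  case: m => v k /=.
  rewrite -big_tagged (bigD1 v) //= [X in _ + X]big1 ?addr0 => [|v' v'v].
    by apply: eq_bigr => k' _; rewrite !pair_prob_diag pair_prob_Tagged -mulrA.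
  by apply: big1 => k' _; rewrite pair_prob_tag_neq ?subrr // eq_sym.
rewrite (eq_bigr _ (fun m _ => row m)) -big_tagged; apply: eq_bigr => v _ /=.
under eq_bigr => k _ do rewrite sumrB -mulr_sumr.
rewrite sumrB -mulr_sumr (sumr_pair_mul (fun i i' => q1 ^+ (i != i').+1)
                                   (fun j j' => q2 ^+ (j != j').+1)).
rewrite !sumr_expr_neq !sumr_const card_prod !card_ord.
by rewrite -mulrnA -(mulr_natr ((p * q1 * q2) ^+ 2)) !natrM; ring.
Qed.

End join_pairs.

Arguments join_pair {U} a b.
Arguments join_left {U a b}.
Arguments join_right {U a b}.
Arguments pair_prob {U a b R}.
Arguments in_join {U a b T R}.

Lemma uniform_prob_ltr (R : realType) (p : R) : 0 <= p <= 1 ->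
  uniform_prob (@ltr01 R) `]-oo, p[ = p%:E.
Proof.
move=> /andP[p_ge0 p_le1]; rewrite /uniform_prob integral_uniform_pdf.
have -> : `]-oo, p[ `&` `[0, 1] = `[0, p[%classic.
  apply/seteqP; split => x /=; rewrite !in_itv /=.
    by move=> [xp /andP[x0 x1]]; rewrite x0 xp.
  by move=> /andP[x0 xp]; rewrite x0 (ltW (lt_le_trans xp p_le1)) xp.
rewrite (eq_integral (fun=> 1%:E)); last first.
  move=> x; rewrite inE /= in_itv /= /uniform_pdf => /andP[x0 xp].
  by rewrite x0 (ltW (lt_le_trans xp p_le1)) subr0 invr1.
rewrite integral_cst //= mul1e lebesgue_measure_itv /= lte_fin.
case: ltP => [_|p_le0]; first by rewrite oppr0 adde0.
by rewrite (@le_anti _ _ p 0) ?p_le0.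
Qed.

Section ubs_probability.
Context d (T : measurableType d) (R : realType) (P : probability T R)
  (U : finType) (a b : U -> nat) (e1 e2 p : R) (h : U -> T -> R)
  (c1 : forall v : U, 'I_(a v) -> T -> bool)
  (c2 : forall v : U, 'I_(b v) -> T -> bool).
Hypothesis p01 : 0 <= p <= 1.
Hypothesis h_meas : forall v, measurable_fun setT (h v).
Hypothesis h_unif : forall v (B : set R), measurable B ->
  P (h v @^-1` B) = uniform_prob (@ltr01 R) B.
Hypothesis c1_meas : forall v k, measurable_fun setT (c1 v k).
Hypothesis c2_meas : forall v k, measurable_fun setT (c2 v k).
Hypothesis c1_prob : forall v k, P [set w | c1 v k w] = (e1 / p)%:E.
Hypothesis c2_prob : forall v k, P [set w | c2 v k w] = (e2 / p)%:E.
Hypothesis ubs_ind : ubs_independent P h c1 c2.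

Lemma prob_ubs_event (H : {set U}) (S1 : {set {v : U & 'I_(a v)}})
    (S2 : {set {v : U & 'I_(b v)}}) :
  P [set w | (forall v, v \in H -> h v w < p) /\
             (forall t, t \in S1 -> c1 (tag t) (tagged t) w) /\
             (forall t, t \in S2 -> c2 (tag t) (tagged t) w)] =
  (p ^+ #|H| * (e1 / p) ^+ #|S1| * (e2 / p) ^+ #|S2|)%:E.
Proof.
pose A v : set R := if v \in H then `]-oo, p[%classic else setT.
pose B1 v (k : 'I_(a v)) : set bool := if Tagged _ k \in S1 then [set true] else setT.
pose B2 v (k : 'I_(b v)) : set bool := if Tagged _ k \in S2 then [set true] else setT.
have mA v : measurable (A v) by rewrite /A; case: ifP.
have -> : [set w | (forall v, v \in H -> h v w < p) /\
             (forall t, t \in S1 -> c1 (tag t) (tagged t) w) /\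
             (forall t, t \in S2 -> c2 (tag t) (tagged t) w)] =
    [set w | (forall v, A v (h v w)) /\ (forall v k, B1 v k (c1 v k w)) /\
             (forall v k, B2 v k (c2 v k w))].
  apply/seteqP; split => w /= [HA [HB1 HB2]]; split; try split.
  - by move=> v; rewrite /A; case: ifP => // /HA; rewrite /= in_itv.
  - by move=> v k; rewrite /B1; case: ifP => // /HB1.
  - by move=> v k; rewrite /B2; case: ifP => // /HB2.
  - by move=> v vH; have := HA v; rewrite /A vH /= in_itv.
  - by move=> [v k] tS; have := HB1 v k; rewrite /B1 tS.
  - by move=> [v k] tS; have := HB2 v k; rewrite /B2 tS.
rewrite ubs_ind //.
have PA v : P (h v @^-1` A v) = (if v \in H then p else 1)%:E.
  rewrite /A; case: ifP => _; last by rewrite preimage_setT probability_setT.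
  by rewrite h_unif // uniform_prob_ltr.
have PB1 v k : P (c1 v k @^-1` B1 v k) = (if Tagged _ k \in S1 then e1 / p else 1)%:E.
  rewrite /B1; case: ifP => _; last by rewrite preimage_setT probability_setT.
  by rewrite -(c1_prob v k); congr (P _); apply/seteqP; split => w /=.
have PB2 v k : P (c2 v k @^-1` B2 v k) = (if Tagged _ k \in S2 then e2 / p else 1)%:E.
  rewrite /B2; case: ifP => _; last by rewrite preimage_setT probability_setT.
  by rewrite -(c2_prob v k); congr (P _); apply/seteqP; split => w /=.
rewrite (eq_bigr _ (fun v _ => PA v)).
rewrite (eq_bigr _ (fun v _ => eq_bigr _ (fun k _ => PB1 v k))).
rewrite [X in (_ * X)%E](eq_bigr _ (fun v _ => eq_bigr _ (fun k _ => PB2 v k))).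
under [X in (_ * X * _)%E]eq_bigr => v _ do rewrite prodEFin.
under [X in (_ * X)%E]eq_bigr => v _ do rewrite prodEFin.
rewrite !prodEFin -!EFinM.
rewrite (big_tagged (fun t => if t \in S1 then e1 / p else 1)).
rewrite (big_tagged (fun t => if t \in S2 then e2 / p else 1)).
by rewrite !prodr_if_mem_card.
Qed.

Lemma measurable_in_join (m : join_pair a b) :
  measurable_fun setT (in_join p h c1 c2 m).
Proof.
apply: measurable_and; apply: measurable_and => //.
all: exact: measurable_fun_ltr (h_meas _) (measurable_cst p).
Qed.

Lemma prob_in_join2 (m m' : join_pair a b) :
  P [set w | in_join p h c1 c2 m w && in_join p h c1 c2 m' w] =
  (pair_prob p (e1 / p) (e2 / p) m m')%:E.
Proof.
rewrite /pair_prob -!cards2 -prob_ubs_event; congr (P _).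
apply/seteqP; split => w /=; rewrite /in_join /ubs_in.
  case/andP => /andP[/andP[hm c1m] /andP[_ c2m]] /andP[/andP[hm' c1m'] /andP[_ c2m']].
  by split; [|split] => ? /set2P[]->.
move=> [Hh [H1 H2]].
rewrite !Hh ?set21 ?set22 //=.
rewrite (H1 (join_left m)) ?set21 // (H1 (join_left m')) ?set22 //.
by rewrite (H2 (join_right m)) ?set21 // (H2 (join_right m')) ?set22.
Qed.

End ubs_probability.

Lemma ubs_cov_sum_gamma (R : realType) (U : finType) (a b : U -> nat)
    (e1 e2 p : R) : p != 0 -> e1 != 0 -> e2 != 0 ->
  let q1 := e1 / p in let q2 := e2 / p in
  (p / (e1 * e2)) ^+ 2 *
    \sum_v (p * ((a v)%:R * q1 + ((a v)%:R ^+ 2 - (a v)%:R) * q1 ^+ 2)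
              * ((b v)%:R * q2 + ((b v)%:R ^+ 2 - (b v)%:R) * q2 ^+ 2)
            - ((a v)%:R * (b v)%:R) ^+ 2 * (p * q1 * q2) ^+ 2) =
  (p^-1 - 1) * gamma a b 2 2 + (e2^-1 - p^-1) * gamma a b 2 1
  + (e1^-1 - p^-1) * gamma a b 1 2
  + (p / (e1 * e2) - e1^-1 - e2^-1 + p^-1) * gamma a b 1 1.
Proof.
move=> p_neq0 e1_neq0 e2_neq0 q1 q2.
rewrite /gamma !mulr_sumr -!big_split /=; apply: eq_bigr => v _.
by rewrite /q1 /q2; field; rewrite p_neq0 e1_neq0 e2_neq0.
Qed.

Theorem theorem4 (R : realType) (d : measure_display) (T : measurableType d)
  (P : probability T R) (U : finType) (a b : U -> nat)
  (e1 e2 p : R)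
  (h : U -> T -> R)
  (c1 : forall v : U, 'I_(a v) -> T -> bool)
  (c2 : forall v : U, 'I_(b v) -> T -> bool) :
  0 < e1 <= 1 -> 0 < e2 <= 1 -> Num.max e1 e2 <= p <= 1 ->
  (* hash values: measurable, uniform on [0,1] *)
  (forall v, measurable_fun setT (h v)) ->
  (forall v (B : set R), measurable B ->
     P (h v @^-1` B) = uniform_prob (@ltr01 R) B) ->
  (* Bernoulli coins with success probabilities q1 = e1/p, q2 = e2/p *)
  (forall v k, measurable_fun setT (c1 v k)) ->
  (forall v k, measurable_fun setT (c2 v k)) ->
  (forall v k, P [set w | c1 v k w] = (e1 / p)%:E) ->
  (forall v k, P [set w | c2 v k w] = (e2 / p)%:E) ->
  (* everything mutually independent *)
  ubs_independent P h c1 c2 ->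
  'V_P[fun w => p / (e1 * e2) * join_size p h c1 c2 w] =
  ((p^-1 - 1) * gamma a b 2 2
   + (e2^-1 - p^-1) * gamma a b 2 1
   + (e1^-1 - p^-1) * gamma a b 1 2
   + (p / (e1 * e2) - e1^-1 - e2^-1 + p^-1) * gamma a b 1 1)%:E.
Proof.
move=> /andP[e1_gt0 _] /andP[e2_gt0 _] /andP[max_le_p p_le1].
move=> h_meas h_unif c1_meas c2_meas c1_prob c2_prob ubs_ind.
have p_gt0 : 0 < p by rewrite (lt_le_trans e1_gt0) // (le_trans _ max_le_p) ?le_max ?lexx.
have p01 : 0 <= p <= 1 by rewrite (ltW p_gt0) p_le1.
have -> : (fun w => p / (e1 * e2) * join_size p h c1 c2 w) =
          (fun w => p / (e1 * e2) * \sum_m (in_join p h c1 c2 m w)%:R).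
  by apply/funext => w; rewrite join_size_sum.
rewrite (@variance_scaled_count _ _ _ P _ _ (pair_prob p (e1 / p) (e2 / p))).
- by rewrite sum_pair_prob_cov ubs_cov_sum_gamma // gt_eqF.
- by move=> m; apply: measurable_in_join.
- by move=> m m'; apply: prob_in_join2.
Qed.
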